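(* Let $n,m\in\mathbb{N}$ and $f:\mathbb{F}_2^n\to\mathbb{F}_2$. Then for every $\mathbf{z}\in\mathbb{F}_2^n$, $$C^{(m)}_f(\mathbf{z})=\zeta_m^{wt(\mathbf{z})}\sum_{\mathbf{u}\in\mathbb{F}_2^n}\left|\mathcal{H}^{(m)}_f(\mathbf{u})\right|^2(-1)^{\mathbf{u}\cdot\mathbf{z}}.$$
   Context: $\zeta_m=e^{2\pi i/m}$; $wt$ is Hamming weight; $\mathbf{x}\cdot\mathbf{y}=\bigoplus_i x_iy_i\in\mathbb{F}_2$; $\mathbf{x}\odot\mathbf{y}=\sum_i x_iy_i$ computed in the integers. The $m$-Hadamard transform is $\mathcal{H}^{(m)}_f(\boldsymbol{\omega})=2^{-n/2}\sum_{\mathbf{x}\in\mathbb{F}_2^n}(-1)^{f(\mathbf{x})\oplus\mathbf{x}\cdot\boldsymbol{\omega}}\zeta_m^{wt(\mathbf{x})}$, and the $m$-autocorrelation is $C^{(m)}_{f}(\mathbf{y})=\sum_{\mathbf{x}\in\mathbb{F}_2^n}(-1)^{f(\mathbf{x})\oplus f(\mathbf{x}\oplus\mathbf{y})}(\zeta_m^2)^{\mathbf{x}\odot\mathbf{y}}$. *)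

From HB Require Import structures.
From mathcomp Require Import all_boot all_order all_algebra.
From mathcomp Require Import all_classical all_reals all_analysis.
From mathcomp Require Import complex.
Set Implicit Arguments. Unset Strict Implicit. Unset Printing Implicit Defensive.
Import Order.TTheory GRing.Theory Num.Theory.
Local Open Scope ring_scope.
Local Open Scope complex_scope.

(* Vectors of F_2^n are represented as finite boolean functions on 'I_n;
   the field F_2 is bool with xor (addb) as addition and && as product. *)
Notation bvec n := {ffun 'I_n -> bool}.

Definition wt n (x : bvec n) : nat := #|[set i | x i]|.

Definition dotb n (x y : bvec n) : bool := \big[addb/false]_(i < n) (x i && y i).

Definition dotz n (x y : bvec n) : nat := \sum_(i < n) (x i && y i : nat).

Definition sgnb (R : realType) (b : bool) : R[i] := (-1) ^+ b.

Definition zeta (R : realType) (m : nat) : R[i] :=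
  (cos (2 * pi / m%:R))%:C + 'i * (sin (2 * pi / m%:R))%:C.

Definition mHadamard (R : realType) (m n : nat) (f : bvec n -> bool) (w : bvec n) : R[i] :=
  ((Num.sqrt (2%:R ^+ n : R))^-1)%:C *
    \sum_(x : bvec n) sgnb R (f x (+) dotb x w) * zeta R m ^+ wt x.

Definition mAutocorr (R : realType) (m n : nat) (f : bvec n -> bool) (y : bvec n) : R[i] :=
  \sum_(x : bvec n) sgnb R (f x (+) f [ffun i => x i (+) y i]) * (zeta R m ^+ 2) ^+ dotz x y.

From HB Require Import structures.
From mathcomp Require Import all_boot all_order all_algebra.
From mathcomp Require Import all_classical all_reals all_analysis.
From mathcomp Require Import complex ring.
Import Order.TTheory GRing.Theory Num.Theory.
Local Open Scope ring_scope.
Local Open Scope complex_scope.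
Set Implicit Arguments. Unset Strict Implicit.

(* Up to the factor 2^{-n/2}, the m-Hadamard transform is the Walsh transform
   W of A(x) = (-1)^{f(x)} zeta^{wt x}. Expanding |W(u)|^2 and summing against
   (-1)^{u.z}, orthogonality of the characters u |-> (-1)^{u.w} leaves
   2^n sum_x A(x) conj(A(x+z)), a Wiener-Khinchin identity. Since |zeta| = 1 and
   wt x + wt z = wt (x+z) + 2 x(.)z, each term zeta^{wt z} A(x) conj(A(x+z)) is
   (-1)^{f(x) + f(x+z)} zeta^{2 x(.)z}, the corresponding autocorrelation term. *)

Section WalshTransform.
Variables (R : realType) (n : nat).
Implicit Types (x y u w z : bvec n) (g : bvec n -> R[i]).

Lemma sgnbD a b : sgnb R (a (+) b) = sgnb R a * sgnb R b.
Proof. exact: signr_addb. Qed.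

Lemma rmorph_sgnb (h : {rmorphism R[i] -> R[i]}) b : h (sgnb R b) = sgnb R b.
Proof. by rewrite rmorph_sign. Qed.

Lemma dotbC x y : dotb x y = dotb y x.
Proof. by apply: eq_bigr => i _; rewrite andbC. Qed.

Lemma dotbDr u x y : dotb u (x + y) = dotb u x (+) dotb u y.
Proof. by rewrite /dotb -big_split; apply: eq_bigr => i _; rewrite ffunE andb_addr. Qed.

Lemma sum_sgnb_dotb w :
  \sum_u sgnb R (dotb u w) = if w == 0 then (2 ^ n)%:R else 0.
Proof.
have [->|w_neq0] := eqVneq w 0.
  rewrite (eq_bigr (fun _ => 1)) => [|u _].
    by rewrite sumr_const card_ffun card_bool card_ord.
  by rewrite /dotb big1 // => i _; rewrite ffunE andbF.
have /existsP[i wi] : [exists i, w i].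
  apply: contraNT w_neq0 => /existsPn w0.
  by apply/eqP/ffunP => j; rewrite ffunE; apply/negbTE/w0.
pose e : bvec n := [ffun j => j == i].
have dot_e : dotb w e.
  rewrite /dotb (bigD1 i) //= big1 ?ffunE ?eqxx ?wi // => j /negbTE ji.
  by rewrite ffunE ji andbF.
(* Translating u by e flips the sign of every term, so the sum is its own opposite. *)
set S := \sum_u _.
have SN : S = - S.
  rewrite {1}/S (reindex_inj (addIr e)) -sumrN; apply: eq_bigr => u _.
  by rewrite dotbC dotbDr dot_e sgnbD dotbC /sgnb mulrN1.
have : S *+ 2 == 0 by rewrite mulr2n {1}SN addNr.
by rewrite mulrn_eq0 => /eqP.
Qed.

Definition walsh g u : R[i] := \sum_x g x * sgnb R (dotb x u).

Lemma add3_eq0_bvec x y z : (x + y + z == 0) = (y == x + z).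
Proof.
by apply/eqP/eqP => /ffunP h; apply/ffunP => i; move: (h i); rewrite !ffunE;
  case: (x i); case: (y i); case: (z i).
Qed.

Lemma sum_sqr_walsh g z :
  \sum_u `|walsh g u| ^+ 2 * sgnb R (dotb u z) =
  (2 ^ n)%:R * \sum_x g x * (g (x + z))^*.
Proof.
have expand u : `|walsh g u| ^+ 2 * sgnb R (dotb u z) =
    \sum_x \sum_y g x * (g y)^* * sgnb R (dotb u (x + y + z)).
  rewrite sqr_normc /walsh rmorph_sum mulr_suml mulr_suml; apply: eq_bigr => x _.
  rewrite mulr_sumr mulr_suml; apply: eq_bigr => y _.
  rewrite rmorphM rmorph_sgnb !dotbDr !sgnbD (dotbC u x) (dotbC u y).
  ring.
rewrite (eq_bigr _ (fun u _ => expand u)) exchange_big mulr_sumr.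
apply: eq_bigr => x _; rewrite exchange_big (bigD1 (x + z)) //= [X in _ + X]big1.
  by rewrite -big_distrr sum_sgnb_dotb add3_eq0_bvec eqxx addr0 /= mulrC.
by move=> y yxz; rewrite -big_distrr sum_sgnb_dotb add3_eq0_bvec (negbTE yxz) /= mulr0.
Qed.

End WalshTransform.

Lemma wtD n (x z : bvec n) : (wt (x + z)%R + 2 * dotz x z = wt x + wt z)%N.
Proof.
have wt_sum y : wt y = (\sum_i (y i : nat))%N.
  by rewrite /wt -sum1_card big_mkcond; apply: eq_bigr => i _; rewrite inE; case: (y i).
rewrite !wt_sum /dotz big_distrr -!big_split; apply: eq_bigr => i _.
by rewrite ffunE; case: (x i); case: (z i).
Qed.

Lemma zeta_mulJ (R : realType) m : zeta R m * (zeta R m)^* = 1.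
Proof.
rewrite -sqr_normc normc_def /= !mul0r !mul1r subr0 !add0r addr0 cos2Dsin2 sqrtr1.
by rewrite expr1n.
Qed.

Section HadamardAutocorrelation.
Variables (R : realType) (m n : nat) (f : bvec n -> bool).

Let signed_zeta x : R[i] := sgnb R (f x) * zeta R m ^+ wt x.

Lemma sqr_norm_mHadamard u :
  `|mHadamard R m f u| ^+ 2 = (2 ^ n)%:R^-1 * `|walsh signed_zeta u| ^+ 2.
Proof.
have -> : mHadamard R m f u = (Num.sqrt (2%:R ^+ n : R))^-1%:C * walsh signed_zeta u.
  congr (_ * _); apply: eq_bigr => x _.
  by rewrite sgnbD mulrAC.
rewrite normrM exprMn; congr (_ * _).
rewrite sqr_normc conjc_real -rmorphM -expr2 exprVn sqr_sqrtr ?exprn_ge0 ?ler0n //.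
by rewrite rmorphV ?unitfE ?pnatr_eq0 ?expf_neq0 // -natrX rmorph_nat.
Qed.

Lemma zetaX_signed_zeta_mulJ x z :
  zeta R m ^+ wt z * (signed_zeta x * (signed_zeta (x + z))^*) =
  sgnb R (f x (+) f (x + z)) * (zeta R m ^+ 2) ^+ dotz x z.
Proof.
rewrite /signed_zeta rmorphM rmorph_sgnb rmorphXn sgnbD -exprM.
have -> : zeta R m ^+ (2 * dotz x z) =
    zeta R m ^+ wt z * zeta R m ^+ wt x * (zeta R m)^* ^+ wt (x + z).
  by rewrite -exprD addnC -(wtD x z) exprD mulrAC -exprMn zeta_mulJ expr1n mul1r.
ring.
Qed.

End HadamardAutocorrelation.

Theorem corollary1 (R : realType) (n m : nat) (hm : (0 < m)%N)
  (f : {ffun 'I_n -> bool} -> bool) (z : {ffun 'I_n -> bool}) :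
  mAutocorr R m f z =
  zeta R m ^+ wt z *
    \sum_(u : {ffun 'I_n -> bool}) `|mHadamard R m f u| ^+ 2 * sgnb R (dotb u z).
Proof.
(* [hm] is not needed: for m = 0 the junk value 2 pi / 0 = 0 gives zeta R 0 = 1. *)
under eq_bigr do rewrite sqr_norm_mHadamard -mulrA.
rewrite -mulr_sumr sum_sqr_walsh mulKf ?pnatr_eq0 ?expn_eq0 //.
rewrite mulr_sumr; apply: eq_bigr => x _.
by rewrite zetaX_signed_zeta_mulJ.
Qed.
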